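(* Let $\mathcal C$ be a category with a class of cofibrations and a class of fibrations such that every map from a cofibrant object to a fibrant object factors both as a cofibration followed by an acyclic fibration and as an acyclic cofibration followed by a fibration, and such that every cofibration from a cofibrant object to a fibrant object admits a relative strong cylinder object. The following conditions are equivalent: (i) $\mathcal C$ is a weak model category, i.e. any fibration from a cofibrant object to a fibrant object admits a relative strong path object; (ii) if $A\overset{i}{\hookrightarrow}B\overset{j}{\hookrightarrow}C$ are two cofibrations between bifibrant objects such that $i$ and $j\circ i$ are acyclic, then $j$ is acyclic; (iii) there is a class $\mathcal J$ of acyclic cofibrations such that any map from a cofibrant object to a fibrant object factors as a map in $\mathcal J$ followed by a fibration, and condition (ii) holds when we further assume $i\in\mathcal J$.
   Context: A class of cofibrations: a class of maps with a cofibrant initial object $0$ ($X$ cofibrant iff $0\to X$ is a cofibration), containing isomorphisms with cofibrant domain, closed under composition, and such that pushouts of a cofibration $A\to B$ along $A\to C$ with $A,C$ cofibrant exist and $C\to C\sqcup_AB$ is a cofibration; a class of fibrations is the dual notion. Bifibrant = fibrant and cofibrant. Acyclic fibration: fibration with the right lifting property against all cofibrations between cofibrant objects; acyclic cofibration: cofibration with the left lifting property against all fibrations between fibrant objects. A relative strong cylinder object for a cofibration $A\to B$ is a factorization $B\sqcup_AB\to I_AB\to B$ of the codiagonal whose first map is a cofibration and whose restriction along the first inclusion of $B$ is an acyclic cofibration. A relative strong path object for a fibration $Y\to X$ is a factorization $Y\to P_XY\to Y\times_XY$ of the diagonal whose second map is a fibration and whose composite with the first projection is an acyclic fibration. A weak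 model category is a category with these classes satisfying the factorization condition, having relative strong cylinder objects for cofibrations from cofibrant to fibrant objects, and relative strong path objects for fibrations from cofibrant to fibrant objects. *)

Set Implicit Arguments.
Set Universe Polymorphism.

(** Categories, composition written in diagrammatic order: [f ;; g] is g ∘ f. *)
Record Category := {
  Ob :> Type;
  Hom : Ob -> Ob -> Type;
  idm : forall X, Hom X X;
  comp : forall X Y Z, Hom X Y -> Hom Y Z -> Hom X Z;
  comp_id_l : forall X Y (f : Hom X Y), comp (idm X) f = f;
  comp_id_r : forall X Y (f : Hom X Y), comp f (idm Y) = f;
  comp_assoc : forall X Y Z W (f : Hom X Y) (g : Hom Y Z) (h : Hom Z W),
      comp (comp f g) h = comp f (comp g h)
}.
Arguments idm {c} X.
Arguments comp {c X Y Z} f g.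
Notation "f ;; g" := (comp f g) (at level 40, left associativity).

Section Cat.
Variable C : Category.

Definition is_iso (X Y : C) (f : Hom C X Y) : Prop :=
  exists g : Hom C Y X, f ;; g = idm X /\ g ;; f = idm Y.

Definition is_pushout (A B D : C) (f : Hom C A B) (g : Hom C A D)
  (P : C) (u : Hom C B P) (v : Hom C D P) : Prop :=
  f ;; u = g ;; v /\
  forall (Q : C) (x : Hom C B Q) (y : Hom C D Q), f ;; x = g ;; y ->
    (exists h : Hom C P Q, u ;; h = x /\ v ;; h = y) /\
    (forall h h' : Hom C P Q, u ;; h = x -> v ;; h = y ->
                              u ;; h' = x -> v ;; h' = y -> h = h').

Definition is_pullback (Y Z X : C) (p : Hom C Y X) (g : Hom C Z X)
  (P : C) (u : Hom C P Y) (v : Hom C P Z) : Prop :=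
  u ;; p = v ;; g /\
  forall (Q : C) (x : Hom C Q Y) (y : Hom C Q Z), x ;; p = y ;; g ->
    (exists h : Hom C Q P, h ;; u = x /\ h ;; v = y) /\
    (forall h h' : Hom C Q P, h ;; u = x -> h ;; v = y ->
                              h' ;; u = x -> h' ;; v = y -> h = h').

Definition lifts (A B X Y : C) (i : Hom C A B) (p : Hom C X Y) : Prop :=
  forall (u : Hom C A X) (v : Hom C B Y), i ;; v = u ;; p ->
    exists h : Hom C B X, i ;; h = u /\ h ;; p = v.

End Cat.
Arguments is_iso {C X Y} f.
Arguments is_pushout {C A B D} f g {P} u v.
Arguments is_pullback {C Y Z X} p g {P} u v.
Arguments lifts {C A B X Y} i p.

Definition MapClass (C : Category) := forall X Y : C, Hom C X Y -> Prop.

Record CofFibData := {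
  cat : Category;
  cof : MapClass cat;
  fib : MapClass cat;
  zero : cat;
  zero_map : forall X : cat, Hom cat zero X;
  one : cat;
  one_map : forall X : cat, Hom cat X one
}.

Section Theory.
Variable M : CofFibData.
Let C := cat M.

Definition is_initial : Prop :=
  forall (X : C) (g : Hom C (zero M) X), g = zero_map M X.
Definition is_terminal : Prop :=
  forall (X : C) (g : Hom C X (one M)), g = one_map M X.

Definition cofibrant (X : C) : Prop := cof M _ _ (zero_map M X).
Definition fibrant (X : C) : Prop := fib M _ _ (one_map M X).
Definition bifibrant (X : C) : Prop := fibrant X /\ cofibrant X.

Definition cof_class_axioms : Prop :=
  cofibrant (zero M) /\
  (forall (X Y : C) (f : Hom C X Y), is_iso f -> cofibrant X -> cof M _ _ f) /\
  (forall (X Y Z : C) (f : Hom C X Y) (g : Hom C Y Z),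
      cof M _ _ f -> cof M _ _ g -> cof M _ _ (f ;; g)) /\
  (forall (A B D : C) (i : Hom C A B) (g : Hom C A D),
      cof M _ _ i -> cofibrant A -> cofibrant D ->
      (exists (P : C) (u : Hom C B P) (v : Hom C D P), is_pushout i g u v) /\
      (forall (P : C) (u : Hom C B P) (v : Hom C D P), is_pushout i g u v -> cof M _ _ v)).

Definition fib_class_axioms : Prop :=
  fibrant (one M) /\
  (forall (X Y : C) (f : Hom C X Y), is_iso f -> fibrant Y -> fib M _ _ f) /\
  (forall (X Y Z : C) (f : Hom C X Y) (g : Hom C Y Z),
      fib M _ _ f -> fib M _ _ g -> fib M _ _ (f ;; g)) /\
  (forall (Y X Z : C) (p : Hom C Y X) (g : Hom C Z X),
      fib M _ _ p -> fibrant X -> fibrant Z ->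
      (exists (P : C) (u : Hom C P Y) (v : Hom C P Z), is_pullback p g u v) /\
      (forall (P : C) (u : Hom C P Y) (v : Hom C P Z), is_pullback p g u v -> fib M _ _ v)).

Definition acyclic_fib {X Y : C} (p : Hom C X Y) : Prop :=
  fib M _ _ p /\
  forall (A B : C) (i : Hom C A B), cofibrant A -> cofibrant B -> cof M _ _ i -> lifts i p.

Definition acyclic_cof {A B : C} (i : Hom C A B) : Prop :=
  cof M _ _ i /\
  forall (X Y : C) (p : Hom C X Y), fibrant X -> fibrant Y -> fib M _ _ p -> lifts i p.

Definition factorization_axiom : Prop :=
  forall (X Y : C) (f : Hom C X Y), cofibrant X -> fibrant Y ->
    (exists (Z : C) (i : Hom C X Z) (p : Hom C Z Y),
        cof M _ _ i /\ acyclic_fib p /\ i ;; p = f) /\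
    (exists (Z : C) (i : Hom C X Z) (p : Hom C Z Y),
        acyclic_cof i /\ fib M _ _ p /\ i ;; p = f).

(** Relative strong cylinder object for a cofibration [i : A -> B]:
    a factorization [B ⊔_A B -> I -> B] of the codiagonal, whose first map is a
    cofibration and whose restriction along the first inclusion is an acyclic cofibration. *)
Definition has_rel_strong_cylinder {A B : C} (i : Hom C A B) : Prop :=
  exists (P : C) (in1 in2 : Hom C B P), is_pushout i i in1 in2 /\
  exists (I : C) (c : Hom C P I) (p : Hom C I B),
    in1 ;; (c ;; p) = idm B /\ in2 ;; (c ;; p) = idm B /\
    cof M _ _ c /\ acyclic_cof (in1 ;; c).

(** Relative strong path object for a fibration [q : Y -> X]:
    a factorization [Y -> P -> Y ×_X Y] of the diagonal, whose second map is a
    fibration and whose composite with the first projection is an acyclic fibration. *)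
Definition has_rel_strong_path {Y X : C} (q : Hom C Y X) : Prop :=
  exists (Q : C) (pr1 pr2 : Hom C Q Y), is_pullback q q pr1 pr2 /\
  exists (P : C) (s : Hom C Y P) (r : Hom C P Q),
    (s ;; r) ;; pr1 = idm Y /\ (s ;; r) ;; pr2 = idm Y /\
    fib M _ _ r /\ acyclic_fib (r ;; pr1).

Definition cylinder_axiom : Prop :=
  forall (A B : C) (i : Hom C A B), cof M _ _ i -> cofibrant A -> fibrant B ->
    has_rel_strong_cylinder i.

Definition path_axiom : Prop :=
  forall (Y X : C) (q : Hom C Y X), fib M _ _ q -> cofibrant Y -> fibrant X ->
    has_rel_strong_path q.

Definition two_of_three_cof : Prop :=
  forall (A B D : C) (i : Hom C A B) (j : Hom C B D),
    bifibrant A -> bifibrant B -> bifibrant D ->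
    cof M _ _ i -> cof M _ _ j -> acyclic_cof i -> acyclic_cof (i ;; j) -> acyclic_cof j.

Definition two_of_three_cof_J : Prop :=
  exists J : MapClass C,
    (forall (A B : C) (i : Hom C A B), J A B i -> acyclic_cof i) /\
    (forall (X Y : C) (f : Hom C X Y), cofibrant X -> fibrant Y ->
       exists (Z : C) (i : Hom C X Z) (p : Hom C Z Y), J X Z i /\ fib M _ _ p /\ i ;; p = f) /\
    (forall (A B D : C) (i : Hom C A B) (j : Hom C B D),
       bifibrant A -> bifibrant B -> bifibrant D ->
       cof M _ _ i -> cof M _ _ j -> J A B i -> acyclic_cof i -> acyclic_cof (i ;; j) ->
       acyclic_cof j).

End Theory.


(* (i) => (ii): it suffices to lift j against fibrations p with bifibrant source,
   since the top of any square factors through such a p by a cofibration followed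
   by an acyclic fibration.  Lifting the acyclic i ;; j against p solves the square
   only after restriction along i; a relative strong path object for p turns the
   discrepancy into a lifting problem of i against the path fibration, and lifting
   j against the acyclic fibration r ;; pr1 then corrects the map.
   (iii) => (i): factor the diagonal of q as s in J followed by a fibration r, and
   r ;; pr1 as a cofibration c followed by an acyclic fibration t.  Then s ;; c has
   the acyclic fibration t as a retraction, so a relative strong cylinder of s ;; c
   contracts onto it and s ;; c is acyclic; by (iii) so is c, and r ;; pr1 is a
   retract of t.  (ii) => (iii) holds with J the acyclic cofibrations. *)

Ltac assoc_r := repeat progress rewrite ?comp_assoc, ?comp_id_l, ?comp_id_r.
Ltac assoc_l := repeat progress rewrite <- ?comp_assoc, ?comp_id_l, ?comp_id_r.
Tactic Notation "assoc_r" "in" hyp(H) :=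
  repeat progress rewrite ?comp_assoc, ?comp_id_l, ?comp_id_r in H.
Tactic Notation "assoc_l" "in" hyp(H) :=
  repeat progress rewrite <- ?comp_assoc, ?comp_id_l, ?comp_id_r in H.

Section Limits.
Context {C : Category}.

Lemma pullback_sym {Y Z X P : C} {p : Hom C Y X} {g : Hom C Z X}
  {u : Hom C P Y} {v : Hom C P Z} : is_pullback p g u v -> is_pullback g p v u.
Proof.
  intros [Hcomm Huniv]. split; [symmetry; exact Hcomm|].
  intros Q x y Hxy. destruct (Huniv Q y x (eq_sym Hxy)) as [[h [Hu Hv]] Huniq].
  split; [exists h; split; assumption|].
  intros h1 h2 ? ? ? ?. apply Huniq; assumption.
Qed.

Lemma pullback_induced {Y Z X P Q : C} {p : Hom C Y X} {g : Hom C Z X}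
  {u : Hom C P Y} {v : Hom C P Z} (x : Hom C Q Y) (y : Hom C Q Z) :
  is_pullback p g u v -> x ;; p = y ;; g -> exists h, h ;; u = x /\ h ;; v = y.
Proof. intros Hpb Hsq. exact (proj1 (proj2 Hpb Q x y Hsq)). Qed.

Lemma pushout_induced {A B D P Q : C} {f : Hom C A B} {g : Hom C A D}
  {u : Hom C B P} {v : Hom C D P} (x : Hom C B Q) (y : Hom C D Q) :
  is_pushout f g u v -> f ;; x = g ;; y -> exists h, u ;; h = x /\ v ;; h = y.
Proof. intros Hpo Hsq. exact (proj1 (proj2 Hpo Q x y Hsq)). Qed.

Lemma pullback_jointly_monic {Y Z X P Q : C} {p : Hom C Y X} {g : Hom C Z X}
  {u : Hom C P Y} {v : Hom C P Z} {h h' : Hom C Q P} :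
  is_pullback p g u v -> h ;; u = h' ;; u -> h ;; v = h' ;; v -> h = h'.
Proof.
  intros [Hcomm Huniv] Hu Hv.
  assert (Hsq : (h' ;; u) ;; p = (h' ;; v) ;; g) by (assoc_r; rewrite Hcomm; reflexivity).
  apply (proj2 (Huniv Q _ _ Hsq)); auto.
Qed.

Lemma pushout_jointly_epi {A B D P Q : C} {f : Hom C A B} {g : Hom C A D}
  {u : Hom C B P} {v : Hom C D P} {h h' : Hom C P Q} :
  is_pushout f g u v -> u ;; h = u ;; h' -> v ;; h = v ;; h' -> h = h'.
Proof.
  intros [Hcomm Huniv] Hu Hv.
  assert (Hsq : f ;; (u ;; h') = g ;; (v ;; h')) by (assoc_l; rewrite Hcomm; reflexivity).
  apply (proj2 (Huniv Q _ _ Hsq)); auto.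
Qed.

End Limits.

Section WeakModelCategory.
Variable M : CofFibData.
Local Notation C := (cat M).
Local Notation cof := (cof M _ _).
Local Notation fib := (fib M _ _).

Hypothesis initial_zero : is_initial M.
Hypothesis terminal_one : is_terminal M.
Hypothesis cof_axioms : cof_class_axioms M.
Hypothesis fib_axioms : fib_class_axioms M.
Hypothesis factorization : factorization_axiom M.
Hypothesis cylinders : cylinder_axiom M.

Lemma cof_comp {X Y Z : C} {f : Hom C X Y} {g : Hom C Y Z} :
  cof f -> cof g -> cof (f ;; g).
Proof. apply cof_axioms. Qed.

Lemma fib_comp {X Y Z : C} {f : Hom C X Y} {g : Hom C Y Z} :
  fib f -> fib g -> fib (f ;; g).
Proof. apply fib_axioms. Qed.

Lemma cofibrant_of_cof {X Y : C} {f : Hom C X Y} :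
  cof f -> cofibrant M X -> cofibrant M Y.
Proof.
  intros Hf HX. unfold cofibrant in *.
  rewrite <- (initial_zero _ (zero_map M X ;; f)). apply cof_comp; assumption.
Qed.

Lemma fibrant_of_fib {X Y : C} {f : Hom C X Y} :
  fib f -> fibrant M Y -> fibrant M X.
Proof.
  intros Hf HY. unfold fibrant in *.
  rewrite <- (terminal_one _ (f ;; one_map M Y)). apply fib_comp; assumption.
Qed.

Lemma cof_pushout {A B D P : C} {i : Hom C A B} {g : Hom C A D}
  {u : Hom C B P} {v : Hom C D P} :
  cof i -> cofibrant M A -> cofibrant M D -> is_pushout i g u v -> cof v.
Proof.
  intros Hi HA HD. destruct cof_axioms as [_ [_ [_ Hpushout]]].
  apply (Hpushout _ _ _ i g Hi HA HD).
Qed.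

Lemma kernel_pair_fib {Y X Q : C} {q : Hom C Y X} {pr1 pr2 : Hom C Q Y} :
  fib q -> fibrant M X -> fibrant M Y -> is_pullback q q pr1 pr2 -> fib pr1 /\ fib pr2.
Proof.
  intros Hq HX HY Hpb. destruct fib_axioms as [_ [_ [_ Hpullback]]].
  destruct (Hpullback _ _ _ q q Hq HX HY) as [_ Hfib]. split.
  - exact (Hfib _ pr2 pr1 (pullback_sym Hpb)).
  - exact (Hfib _ pr1 pr2 Hpb).
Qed.

Lemma acyclic_cof_of_lifts_cofibrant_source {B D : C} {j : Hom C B D} :
  cofibrant M B -> cof j ->
  (forall (E F : C) (p : Hom C E F),
      cofibrant M E -> fibrant M E -> fibrant M F -> fib p -> lifts j p) ->
  acyclic_cof M j.
Proof.
  intros HB Hj Hlifts. split; [exact Hj|].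
  intros E F p HE HF Hp u v Hsq.
  destruct (factorization _ _ u HB HE) as [[E' [c [t [Hc [Ht Hct]]]]] _].
  assert (HE'cof : cofibrant M E') by exact (cofibrant_of_cof Hc HB).
  assert (HE'fib : fibrant M E') by exact (fibrant_of_fib (proj1 Ht) HE).
  destruct (Hlifts _ _ (t ;; p) HE'cof HE'fib HF (fib_comp (proj1 Ht) Hp) c v)
    as [l [Hl1 Hl2]].
  { rewrite Hsq, <- Hct. assoc_r. reflexivity. }
  exists (l ;; t). split.
  - assoc_l. rewrite Hl1. exact Hct.
  - assoc_r. exact Hl2.
Qed.

Lemma lifts_of_rel_strong_path {A B D E F : C} {i : Hom C A B} {j : Hom C B D}
  {p : Hom C E F} :
  cofibrant M B -> cofibrant M D -> cof j ->
  acyclic_cof M i -> acyclic_cof M (i ;; j) ->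
  fib p -> fibrant M E -> fibrant M F -> has_rel_strong_path M p -> lifts j p.
Proof.
  intros HB HD Hj Hi Hij Hp HE HF [Q [pr1 [pr2 [Hpb [P [s [r [Hs1 [Hs2 [Hr Hrpr1]]]]]]]]]].
  destruct (kernel_pair_fib Hp HF HE Hpb) as [Hpr1 Hpr2].
  assert (HQ : fibrant M Q) by exact (fibrant_of_fib Hpr2 HE).
  assert (HP : fibrant M P) by exact (fibrant_of_fib Hr HQ).
  assoc_r in Hs1. assoc_r in Hs2.
  intros u v Hsq.
  destruct (proj2 Hij _ _ p HE HF Hp (i ;; u) v) as [l [Hl1 Hl2]].
  { assoc_r. rewrite Hsq. reflexivity. }
  (* j ;; l and u agree on A; H below is a path between them relative to A *)
  destruct (pullback_induced (j ;; l) u Hpb) as [m [Hm1 Hm2]].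
  { assoc_r. rewrite Hl2. exact Hsq. }
  destruct (proj2 Hi _ _ r HP HQ Hr (i ;; u ;; s) m) as [H [HH1 HH2]].
  { apply (pullback_jointly_monic Hpb).
    - assoc_r. rewrite Hm1, Hs1. assoc_l. rewrite Hl1. assoc_r. reflexivity.
    - assoc_r. rewrite Hm2, Hs2. assoc_r. reflexivity. }
  destruct (proj2 Hrpr1 _ _ j HB HD Hj H l) as [G [HG1 HG2]].
  { assoc_l. rewrite HH2. symmetry. exact Hm1. }
  exists (G ;; r ;; pr2). split.
  - assoc_l. rewrite HG1, HH2. exact Hm2.
  - rewrite <- Hl2, <- HG2. assoc_r. rewrite (proj1 Hpb). reflexivity.
Qed.

Lemma two_of_three_cof_of_path_axiom : path_axiom M -> two_of_three_cof M.
Proof.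
  intros Hpath A B D i j _ [_ HB] [_ HD] _ Hj Hi Hij.
  apply (acyclic_cof_of_lifts_cofibrant_source HB Hj).
  intros E F p HEcof HEfib HF Hp.
  exact (lifts_of_rel_strong_path HB HD Hj Hi Hij Hp HEfib HF (Hpath _ _ p Hp HEcof HF)).
Qed.

Lemma lifts_of_deformation {Y W I : C} {g : Hom C Y W} {t : Hom C W Y}
  {j0 j1 : Hom C W I} {H : Hom C I W} :
  g ;; j0 = g ;; j1 -> g ;; t = idm Y -> j0 ;; H = t ;; g -> j1 ;; H = idm W ->
  acyclic_cof M j0 ->
  forall (E F : C) (f : Hom C E F), fibrant M E -> fibrant M F -> fib f -> lifts g f.
Proof.
  intros Hg01 Hgt HH0 HH1 Hj0 E F f HE HF Hf u v Hsq.
  destruct (proj2 Hj0 _ _ f HE HF Hf (t ;; u) (H ;; v)) as [K [HK1 HK2]].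
  { assoc_l. rewrite HH0. assoc_r. rewrite Hsq. reflexivity. }
  exists (j1 ;; K). split.
  - assoc_l. rewrite <- Hg01. assoc_r. rewrite HK1. assoc_l. rewrite Hgt. assoc_r. reflexivity.
  - assoc_r. rewrite HK2. assoc_l. rewrite HH1. assoc_r. reflexivity.
Qed.

Lemma cylinder_contraction {Y W P I : C} {g : Hom C Y W} {t : Hom C W Y}
  {in1 in2 : Hom C W P} {c : Hom C P I} {p : Hom C I W} :
  cofibrant M Y -> cof g -> acyclic_fib M t -> g ;; t = idm Y ->
  is_pushout g g in1 in2 -> in1 ;; (c ;; p) = idm W -> in2 ;; (c ;; p) = idm W -> cof c ->
  exists H : Hom C I W, in1 ;; c ;; H = t ;; g /\ in2 ;; c ;; H = idm W.
Proof.
  intros HY Hg Ht Hgt Hpo Hp1 Hp2 Hc.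
  assert (HW : cofibrant M W) by exact (cofibrant_of_cof Hg HY).
  assert (HP : cofibrant M P) by exact (cofibrant_of_cof (cof_pushout Hg HY HW Hpo) HW).
  assert (HI : cofibrant M I) by exact (cofibrant_of_cof Hc HP).
  destruct (pushout_induced (t ;; g) (idm W) Hpo) as [phi [Hphi1 Hphi2]].
  { assoc_l. rewrite Hgt. assoc_r. reflexivity. }
  assoc_l in Hp1. assoc_l in Hp2.
  destruct (proj2 Ht _ _ c HP HI Hc phi (p ;; t)) as [H [HH1 HH2]].
  { apply (pushout_jointly_epi Hpo); assoc_l.
    - rewrite Hp1, Hphi1. assoc_r. rewrite Hgt. assoc_r. reflexivity.
    - rewrite Hp2, Hphi2. assoc_r. reflexivity. }
  exists H. split; assoc_r; rewrite HH1; assumption.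
Qed.

Lemma acyclic_cof_of_acyclic_fib_retraction {Y W : C} {g : Hom C Y W} {t : Hom C W Y} :
  cof g -> cofibrant M Y -> fibrant M W -> acyclic_fib M t -> g ;; t = idm Y ->
  acyclic_cof M g.
Proof.
  intros Hg HY HW Ht Hgt.
  destruct (cylinders _ _ g Hg HY HW)
    as [P [in1 [in2 [Hpo [I [c [p [Hp1 [Hp2 [Hc Hin1c]]]]]]]]]].
  destruct (cylinder_contraction HY Hg Ht Hgt Hpo Hp1 Hp2 Hc) as [H [HH1 HH2]].
  split; [exact Hg|].
  refine (lifts_of_deformation _ Hgt HH1 HH2 Hin1c).
  assoc_l. rewrite (proj1 Hpo). reflexivity.
Qed.

Lemma acyclic_fib_of_acyclic_factorization {P W Y : C} {c : Hom C P W} {t : Hom C W Y} :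
  fibrant M P -> fibrant M Y -> fib (c ;; t) -> acyclic_cof M c -> acyclic_fib M t ->
  acyclic_fib M (c ;; t).
Proof.
  intros HP HY Hct Hc Ht. split; [exact Hct|].
  (* a retraction h of c over Y exhibits c ;; t as a retract of t *)
  destruct (proj2 Hc _ _ (c ;; t) HP HY Hct (idm P) t) as [h [Hh1 Hh2]].
  { rewrite comp_id_l. reflexivity. }
  intros A B i HA HB Hi u v Hsq.
  destruct (proj2 Ht _ _ i HA HB Hi (u ;; c) v) as [k [Hk1 Hk2]].
  { rewrite Hsq. assoc_r. reflexivity. }
  exists (k ;; h). split.
  - assoc_l. rewrite Hk1. assoc_r. rewrite Hh1. assoc_r. reflexivity.
  - assoc_r. rewrite Hh2. exact Hk2.
Qed.

Lemma acyclic_fib_of_acyclic_cof_section {Y P : C} {s : Hom C Y P} {p : Hom C P Y} :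
  bifibrant M Y -> fibrant M P -> fib p -> acyclic_cof M s -> s ;; p = idm Y ->
  (forall (W : C) (c : Hom C P W),
      bifibrant M W -> cof c -> acyclic_cof M (s ;; c) -> acyclic_cof M c) ->
  acyclic_fib M p.
Proof.
  intros [HYfib HYcof] HP Hp Hs Hsp Hcancel.
  assert (HPcof : cofibrant M P) by exact (cofibrant_of_cof (proj1 Hs) HYcof).
  destruct (factorization _ _ p HPcof HYfib) as [[W [c [t [Hc [Ht Hct]]]]] _].
  assert (HWcof : cofibrant M W) by exact (cofibrant_of_cof Hc HPcof).
  assert (HWfib : fibrant M W) by exact (fibrant_of_fib (proj1 Ht) HYfib).
  assert (Hsc : acyclic_cof M (s ;; c)).
  { refine (acyclic_cof_of_acyclic_fib_retraction (cof_comp (proj1 Hs) Hc) HYcof HWfib Ht _).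
    assoc_r. rewrite Hct. exact Hsp. }
  subst p. apply acyclic_fib_of_acyclic_factorization; try assumption.
  exact (Hcancel W c (conj HWfib HWcof) Hc Hsc).
Qed.

Lemma path_axiom_of_two_of_three_cof_J : two_of_three_cof_J M -> path_axiom M.
Proof.
  intros [J [HJacyclic [HJfactor HJcancel]]] Y X q Hq HY HX.
  assert (HYfib : fibrant M Y) by exact (fibrant_of_fib Hq HX).
  destruct (proj1 (proj2 (proj2 (proj2 fib_axioms)) _ _ _ q q Hq HX HYfib))
    as [Q [pr1 [pr2 Hpb]]].
  destruct (kernel_pair_fib Hq HX HYfib Hpb) as [Hpr1 Hpr2].
  assert (HQ : fibrant M Q) by exact (fibrant_of_fib Hpr2 HYfib).
  destruct (pullback_induced (idm Y) (idm Y) Hpb eq_refl) as [d [Hd1 Hd2]].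
  destruct (HJfactor _ _ d HY HQ) as [P [s [r [HJs [Hr Hsr]]]]].
  assert (Hs : acyclic_cof M s) by exact (HJacyclic _ _ s HJs).
  assert (HP : fibrant M P) by exact (fibrant_of_fib Hr HQ).
  exists Q, pr1, pr2. split; [exact Hpb|]. exists P, s, r.
  rewrite Hsr. split; [exact Hd1|]. split; [exact Hd2|]. split; [exact Hr|].
  apply (acyclic_fib_of_acyclic_cof_section (conj HYfib HY) HP (fib_comp Hr Hpr1) Hs).
  - assoc_l. rewrite Hsr. exact Hd1.
  - intros W c HW Hc Hsc.
    refine (HJcancel _ _ _ s c (conj HYfib HY) _ HW (proj1 Hs) Hc HJs Hs Hsc).
    exact (conj HP (cofibrant_of_cof (proj1 Hs) HY)).
Qed.

Lemma two_of_three_cof_J_of_two_of_three_cof : two_of_three_cof M -> two_of_three_cof_J M.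
Proof.
  intros H23. exists (fun A B (i : Hom C A B) => acyclic_cof M i).
  split; [auto|]. split.
  - intros X Y f HX HY.
    destruct (factorization _ _ f HX HY) as [_ [Z [i [p [Hi [Hp Hip]]]]]].
    exists Z, i, p. auto.
  - intros A B D i j HA HB HD Hi Hj _. exact (H23 A B D i j HA HB HD Hi Hj).
Qed.

End WeakModelCategory.

Theorem proposition2p3p3 (M : CofFibData) :
  is_initial M -> is_terminal M ->
  cof_class_axioms M -> fib_class_axioms M ->
  factorization_axiom M -> cylinder_axiom M ->
  (path_axiom M <-> two_of_three_cof M) /\
  (two_of_three_cof M <-> two_of_three_cof_J M).
Proof.
  intros HI HT HC HF Hfact Hcyl.
  assert (H_i_ii : path_axiom M -> two_of_three_cof M)
    by exact (two_of_three_cof_of_path_axiom M HI HT HC HF Hfact).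
  assert (H_ii_iii : two_of_three_cof M -> two_of_three_cof_J M)
    by exact (two_of_three_cof_J_of_two_of_three_cof M Hfact).
  assert (H_iii_i : two_of_three_cof_J M -> path_axiom M)
    by exact (path_axiom_of_two_of_three_cof_J M HI HT HC HF Hfact Hcyl).
  tauto.
Qed.
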